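(* Let $n,t$ be positive integers and let $\mathcal{B}$ be a partition of $[n]$ into $t$ nonempty blocks. Define the set $\mathcal{R}$ of required pairs as the smallest set of pairs $(\underline{i},\mathcal{B}')$, with $\underline{i}\in[n]$ and $\mathcal{B}'\subseteq\mathcal{B}$, such that: - $(1,\mathcal{B})\in\mathcal{R}$; - whenever $(\underline{i},\mathcal{B}')\in\mathcal{R}$ with $\mathcal{B}'\neq\varnothing$, then $(\omega(\underline{i},\underline{B})+_n1,\ \mathcal{B}'\setminus\{\underline{B}\})\in\mathcal{R}$ for every $\underline{B}\in\mathcal{B}'$. These are exactly the table entries $K[\underline{i},\mathcal{B}']$ that must be computed in order to evaluate $K[1,\mathcal{B}]$ by the recurrence $$K[\underline{i},\mathcal{B}']=\min_{\underline{B}\in\mathcal{B}'}\{\delta(\underline{i},\underline{B})+K[\omega(\underline{i},\underline{B})+_n1,\mathcal{B}'\setminus\{\underline{B}\}]\}.$$ Then for every proper subset $\mathcal{B}'\subsetneq\mathcal{B}$ and every $\underline{i}\in\bigcup_{B\in\mathcal{B}'}B$, the pair $(\underline{i}+_n1,\mathcal{B}')$ does not belong to $\mathcal{R}$. In other words, the entry $K[\underline{i}+_n1,\mathcal{B}']$ is not required to be computed.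
   Context: Each block $B\in\mathcal{B}$ is written as an increasing sequence $\langle i_1<\cdots<i_\ell\rangle$ of its elements. For $\underline{i}\in[n]$: - If $\underline{i}\le i_1$ or $i_\ell<\underline{i}$, then $\omega(\underline{i},B)=i_\ell$. - Otherwise $i_l<\underline{i}\le i_{l+1}$ for a unique $l\in[\ell-1]$, and $\omega(\underline{i},B)=i_l$. $\delta(\underline{i},B)=0$ if $\underline{i}\le i_1$ and $i_\ell<n$, and $\delta(\underline{i},B)=1$ otherwise. $a+_n1$ denotes $a+1$ for $a<n$, and $n+_n1=1$. Here $K[\underline{i},\mathcal{B}']$ is the dynamic programming table of the Train Marshalling Problem. Its entry is the minimum number of segments of $A(n)$ (the infinite concatenation of copies of $\langle1,\ldots,n\rangle$) needed to place the blocks of $\mathcal{B}'$ so that the blocks do not interleave and no element is placed before position $\underline{i}$ of the first segment. *)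

From mathcomp Require Import all_boot.
Set Implicit Arguments. Unset Strict Implicit. Unset Printing Implicit Defensive.

(* Convention: the ground set [n] = {1,...,n} is represented by 'I_n,
   the element k : 'I_n standing for the integer k+1.  All comparisons are
   shifted consistently, and  a +_n 1  becomes  (a.+1 %% n). *)

Section TMP.
Variable n : nat.

Definition blk_first (B : {set 'I_n}) : nat := \big[minn/n]_(j in B) val j.
Definition blk_last (B : {set 'I_n}) : nat := \max_(j in B) val j.

Definition omega (i : nat) (B : {set 'I_n}) : nat :=
  if (i <= blk_first B) || (blk_last B < i) then blk_last B
  else \max_(j in B | val j < i) val j.

Inductive required (P : {set {set 'I_n}}) : nat -> {set {set 'I_n}} -> Prop :=
| req_start : required P 0 P
| req_step (i : nat) (P' : {set {set 'I_n}}) (B : {set 'I_n}) :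
    required P i P' -> B \in P' ->
    required P ((omega i B).+1 %% n) (P' :\ B).
End TMP.

From mathcomp Require Import all_boot.

Set Implicit Arguments.
Unset Strict Implicit.
Unset Printing Implicit Defensive.

(* If a required pair (i +_n 1, P') with P' a proper subset of P exists, its
   last derivation step removed a block B of P with omega(k, B) +_n 1 = i +_n 1.
   Since omega(k, B) is an element of B, this forces i \in B; but i also lies
   in a block of P', and the blocks of a partition are disjoint, so B would be
   that block of P', which contradicts its removal. *)

Section RequiredPairs.
Variable n : nat.
Implicit Types (P Q : {set {set 'I_n}}) (B : {set 'I_n}).

Lemma required_subset P i Q : required P i Q -> Q \subset P.
Proof.
elim=> [|k Q0 B _ sQ0P _]; first exact: subxx.
exact: subset_trans (subD1set _ _) sQ0P.
Qed.

Lemma required_last_step P i Q : required P i Q -> Q != P ->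
  exists k, exists2 B, B \in P :\: Q & i = (omega k B).+1 %% n.
Proof.
case=> [/eqP // | k Q0 B reqQ0 BQ0 _]; exists k, B => //.
by rewrite !inE eqxx (subsetP (required_subset reqQ0) B BQ0).
Qed.

Lemma blk_last_mem B : B != set0 -> exists2 j : 'I_n, j \in B & blk_last B = j.
Proof.
move=> /set0Pn[x xB].
have [|j jB last_j] := eq_bigmax_cond (fun j : 'I_n => val j) (A := [pred j in B]).
  by apply/card_gt0P; exists x.
by exists j.
Qed.

Lemma omega_mem i B : B != set0 -> exists2 j : 'I_n, j \in B & omega i B = j.
Proof.
move=> nzB; rewrite /omega; case: ifPn => [_ | /norP[]]; first exact: blk_last_mem.
rewrite -ltnNge -leqNgt => first_lt_i i_le_last.
pose below := [pred j : 'I_n | (j \in B) && (val j < i)].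
have [j below_j | no_below] := pickP below.
  have [|k /andP[kB _] max_k] := eq_bigmax_cond (fun j : 'I_n => val j) (A := below).
    by apply/card_gt0P; exists j.
  by exists k.
suff : i <= blk_first B by rewrite leqNgt first_lt_i.
have [l _ last_l] := blk_last_mem nzB.
apply: (big_ind (leq i)) => [|a b|j jB].
- by apply: leq_trans i_le_last _; rewrite last_l; exact: ltnW.
- by rewrite leq_min => -> ->.
- by have := no_below j; rewrite /= jB /= => /negbT; rewrite -leqNgt.
Qed.

Lemma succ_modn_inj (a b : nat) : a < n -> b < n -> a.+1 %% n = b.+1 %% n -> a = b.
Proof.
move=> lt_an lt_bn /eqP.
by rewrite -(addn1 a) -(addn1 b) eqn_modDr !modn_small // => /eqP.
Qed.

End RequiredPairs.

Theorem lemma1 (n t : nat) (P : {set {set 'I_n}}) :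
  0 < n -> 0 < t ->
  partition P [set: 'I_n] -> set0 \notin P -> #|P| = t ->
  forall P' : {set {set 'I_n}}, P' \proper P ->
  forall i : 'I_n, i \in cover P' ->
  ~ required P (i.+1 %% n) P'.
Proof.
move=> _ _ /and3P[_ trivP _] P0 _ P' ltP'P i /bigcupP[B' B'P' iB'] req.
have [k [B /setDP[BP BnP'] omega_kB]] := required_last_step req (proper_neq ltP'P).
have [j jB omega_j] := omega_mem k (memPn P0 B BP).
have eq_ji : j = i.
  by apply/ord_inj/succ_modn_inj => //; rewrite -omega_j -omega_kB.
have B'P : B' \in P := subsetP (proper_sub ltP'P) B' B'P'.
have eq_BB' : B = B'.
  by rewrite -(def_pblock trivP BP jB) eq_ji (def_pblock trivP B'P iB').
by move: BnP'; rewrite eq_BB' B'P'.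
Qed.
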